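(* Let $L$ be a multisorted algebra in the positive existential signature satisfying axioms (1), (2), (3), (4), (8). Let $r\neq s$ be two elements of the same sort of $L$. Then there is a set $W$ and an almost morphism $\varphi\colon L\to A(W)$ into the positive existential algebra of $W$ such that $\varphi(r)\neq\varphi(s)$.
   Context: The Boolean prime ideal theorem is assumed. Signature. There is a sort $n$ for each $n\ge0$. For every function $\alpha\colon\{1,\dots,n\}\to\{1,\dots,k\}$ there is a unary function symbol (''substitution'') $\alpha\colon n\to k$ (argument of sort $n$, value of sort $k$). Each sort has $0,1,\vee,\wedge$; for each $n$ there is $\exists\colon n+1\to n$ (positive existential signature). For $\alpha\colon k\to n$, $\beta\colon n\to m$, $\beta\circ\alpha$ is the substitution symbol of the composite function; $\mathrm{id}$ is the identity substitution. The associated cylindrification of $\exists\colon n+1\to n$ is $c\colon n\to n+1$, $c(i)=i$. For a set $W$: $\alpha^{\mathrm{tuple}}(x_1,\dots,x_k)=(x_{\alpha(1)},\dots,x_{\alpha(n)})$, $\alpha^{\mathrm{relation}}(r)=\{\bar x\in W^k:\alpha^{\mathrm{tuple}}(\bar x)\in r\}$. The positive existential algebra $A(W)$ interprets sort $n$ as $\mathcal P(W^n)$, $\alpha$ as $\alpha^{\mathrm{relation}}$, $0,1,\vee,\wedge$ as $\emptyset,W^n,\cup,\cap$, and $\exists(r)=\{\bar x:\exists y\,(\bar x,y)\in r\}$. An almost morphism $\varphi\colon L\to A(W)$ is a sort-preserving family of maps commuting with all substitutions and with $0,1,\vee,\wedge$, and satisfying $\exists(\varphi(r))\subseteq\varphi(\exists(r))$.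 Axioms: (1) each sort is a bounded distributive lattice; (2) substitutions preserve $0,1,\vee,\wedge$; (3) $(\beta\circ\alpha)(r)=\beta(\alpha(r))$; (4) $\mathrm{id}(r)=r$; (8) $r\le c(\exists(r))$ (where $x\le y$ means $x=x\wedge y$). *)

From mathcomp Require Import all_boot.
Set Implicit Arguments. Unset Strict Implicit. Unset Printing Implicit Defensive.

(* Sorts are indexed by n : nat; {1,...,n} is rendered as 'I_n (0-based).
   A substitution symbol alpha : n -> k is an element of {ffun 'I_n -> 'I_k}
   (finite functions, so extensionally equal functions are the same symbol). *)

Record PEAlg := {
  car : nat -> Type;
  pe0 : forall n, car n;
  pe1 : forall n, car n;
  pejoin : forall n, car n -> car n -> car n;
  pemeet : forall n, car n -> car n -> car n;
  subst : forall n k, {ffun 'I_n -> 'I_k} -> car n -> car k;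
  pex : forall n, car n.+1 -> car n
}.

Section PEAx.
Variable L : PEAlg.
Local Notation "x \v y" := (pejoin x y) (at level 50).
Local Notation "x \w y" := (pemeet x y) (at level 40).

Definition pe_le n (x y : car L n) : Prop := x = x \w y.

Definition compf k n m (beta : {ffun 'I_n -> 'I_m}) (alpha : {ffun 'I_k -> 'I_n})
  : {ffun 'I_k -> 'I_m} := [ffun i => beta (alpha i)].
Definition idf n : {ffun 'I_n -> 'I_n} := [ffun i => i].
Definition cyl n : {ffun 'I_n -> 'I_n.+1} := [ffun i => widen_ord (leqnSn n) i].

Definition ax1 : Prop := forall n (x y z : car L n),
  x \v (y \v z) = (x \v y) \v z /\ x \w (y \w z) = (x \w y) \w z /\
  x \v y = y \v x /\ x \w y = y \w x /\
  x \v (x \w y) = x /\ x \w (x \v y) = x /\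
  x \w (y \v z) = (x \w y) \v (x \w z) /\
  x \v pe0 L n = x /\ x \w pe1 L n = x.
Definition ax2 : Prop := forall n k (a : {ffun 'I_n -> 'I_k}) (x y : car L n),
  [/\ subst a (pe0 L n) = pe0 L k, subst a (pe1 L n) = pe1 L k,
      subst a (x \v y) = subst a x \v subst a y &
      subst a (x \w y) = subst a x \w subst a y].
Definition ax3 : Prop := forall k n m (alpha : {ffun 'I_k -> 'I_n})
  (beta : {ffun 'I_n -> 'I_m}) (r : car L k),
  subst (compf beta alpha) r = subst beta (subst alpha r).
Definition ax4 : Prop := forall n (r : car L n), subst (idf n) r = r.
Definition ax8 : Prop := forall n (r : car L n.+1),
  pe_le r (subst (cyl n) (pex r)).

Definition pe_axioms : Prop := [/\ ax1, ax2, ax3, ax4 & ax8].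
End PEAx.

(* The positive existential algebra A(W): sort n is P(W^n), with
   W^n = 'I_n -> W and subsets represented as predicates. *)
Definition perel (W : Type) n := ('I_n -> W) -> Prop.

Definition subst_tuple W n k (a : {ffun 'I_n -> 'I_k}) (x : 'I_k -> W) : 'I_n -> W :=
  fun i => x (a i).
Definition subst_rel W n k (a : {ffun 'I_n -> 'I_k}) (r : perel W n) : perel W k :=
  fun x => r (subst_tuple a x).
(* the tuple (x_1,...,x_n,y) in W^(n+1) *)
Definition snoc_tuple W n (x : 'I_n -> W) (y : W) : 'I_n.+1 -> W :=
  fun i => match unlift ord_max i with Some j => x j | None => y end.
Definition ex_rel W n (r : perel W n.+1) : perel W n :=
  fun x => exists y, r (snoc_tuple x y).

(* Almost morphism phi : L -> A(W); equalities of sets are stated pointwise. *)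
Definition almost_morphism (L : PEAlg) (W : Type) (phi : forall n, car L n -> perel W n)
  : Prop :=
  (forall n k (a : {ffun 'I_n -> 'I_k}) (r : car L n) x,
          phi k (subst a r) x <-> subst_rel a (phi n r) x) /\
      (forall n x, ~ phi n (pe0 L n) x) /\
      (forall n x, phi n (pe1 L n) x) /\
      (forall n (r s : car L n) x, phi n (pejoin r s) x <-> (phi n r x \/ phi n s x)) /\
      (forall n (r s : car L n) x, phi n (pemeet r s) x <-> (phi n r x /\ phi n s x)) /\
      (forall n (r : car L n.+1) x, ex_rel (phi n.+1 r) x -> phi n (pex r) x).

(* Fix a pair with [a] not below [b] (one of [r], [s] is not below the other).
   By Zorn's lemma there is a maximal ideal of the sort containing [b] and
   avoiding [a]; in a distributive lattice it is prime, so its complement [F]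
   is a prime filter, i.e. a bounded lattice morphism into [Prop].  Taking
   [W = {1..n}] and reading a tuple [x : W^m] as the substitution [x : m -> n],
   set [phi(t)(x) := F (x t)].  Axioms (2)-(3) make [phi] commute with the
   lattice operations and with substitutions, axiom (8) gives the inclusion
   for [exists], and axiom (4) gives [phi(t)(id) = F t], separating [r] and [s]. *)
From mathcomp Require Import all_boot.
From mathcomp Require Import boolp classical_sets.
Set Implicit Arguments. Unset Strict Implicit.

Local Open Scope classical_set_scope.

Section Lattice.
Variables (L : PEAlg) (n : nat).
Hypothesis H1 : ax1 L.
Local Notation T := (car L n).
Local Notation "x \v y" := (pejoin x y) (at level 50).
Local Notation "x \w y" := (pemeet x y) (at level 40).
Local Notation "x <=: y" := (pe_le x y) (at level 70).

Let joinA (x y z : T) : x \v (y \v z) = (x \v y) \v z.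
Proof. by have [? _] := H1 x y z. Qed.
Let meetA (x y z : T) : x \w (y \w z) = (x \w y) \w z.
Proof. by have [_ [? _]] := H1 x y z. Qed.
Let joinC (x y : T) : x \v y = y \v x.
Proof. by have [_ [_ [? _]]] := H1 x y x. Qed.
Let meetC (x y : T) : x \w y = y \w x.
Proof. by have [_ [_ [_ [? _]]]] := H1 x y x. Qed.
Let joinKI (x y : T) : x \v (x \w y) = x.
Proof. by have [_ [_ [_ [_ [? _]]]]] := H1 x y x. Qed.
Let meetKU (x y : T) : x \w (x \v y) = x.
Proof. by have [_ [_ [_ [_ [_ [? _]]]]]] := H1 x y x. Qed.
Let meetUr (x y z : T) : x \w (y \v z) = (x \w y) \v (x \w z).
Proof. by have [_ [_ [_ [_ [_ [_ [? _]]]]]]] := H1 x y z. Qed.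
Let join0 (x : T) : x \v pe0 L n = x.
Proof. by have [_ [_ [_ [_ [_ [_ [_ [? _]]]]]]]] := H1 x x x. Qed.
Let meet1 (x : T) : x \w pe1 L n = x.
Proof. by have [_ [_ [_ [_ [_ [_ [_ [_ ?]]]]]]]] := H1 x x x. Qed.

Let meetxx (x : T) : x \w x = x. Proof. by rewrite -{2}(joinKI x x) meetKU. Qed.

Lemma pe_le_refl (x : T) : x <=: x. Proof. by rewrite /pe_le meetxx. Qed.

Lemma pe_le_trans (y x z : T) : x <=: y -> y <=: z -> x <=: z.
Proof.
rewrite /pe_le => xy yz; transitivity (x \w (y \w z)); first by rewrite -yz.
by rewrite meetA -xy.
Qed.

Lemma pe_le_anti (x y : T) : x <=: y -> y <=: x -> x = y.
Proof. by rewrite /pe_le => xy yx; rewrite xy meetC -yx. Qed.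

Lemma pe_leEjoin (x y : T) : x <=: y <-> x \v y = y.
Proof.
rewrite /pe_le; split=> [xy | <-]; last by rewrite meetKU.
by rewrite xy joinC meetC joinKI.
Qed.

Lemma pe_leUl (x y : T) : x <=: x \v y. Proof. by rewrite /pe_le meetKU. Qed.

Lemma pe_leUr (x y : T) : y <=: x \v y. Proof. by rewrite joinC; apply: pe_leUl. Qed.

Lemma pe_leU (x y z : T) : x <=: z -> y <=: z -> x \v y <=: z.
Proof. by rewrite !pe_leEjoin => xz yz; rewrite -joinA yz xz. Qed.

Lemma pe_leU2 (x x' y y' : T) : x <=: x' -> y <=: y' -> x \v y <=: x' \v y'.
Proof.
move=> xx' yy'; apply: pe_leU.
- exact: pe_le_trans xx' (pe_leUl _ _).
- exact: pe_le_trans yy' (pe_leUr _ _).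
Qed.

Lemma pe_leIl (x y : T) : x \w y <=: x.
Proof. by rewrite pe_leEjoin joinC joinKI. Qed.

Lemma pe_leIr (x y : T) : x \w y <=: y. Proof. by rewrite meetC; apply: pe_leIl. Qed.

Lemma pe_leI (x y z : T) : z <=: x -> z <=: y -> z <=: x \w y.
Proof. by rewrite /pe_le => zx zy; rewrite meetA -zx -zy. Qed.

Lemma pe_le0x (x : T) : pe0 L n <=: x. Proof. by rewrite pe_leEjoin joinC join0. Qed.

Lemma pe_lex1 (x : T) : x <=: pe1 L n. Proof. by rewrite /pe_le meet1. Qed.

Lemma pe_leUI (p x y : T) : (p \v x) \w (p \v y) <=: p \v (x \w y).
Proof.
rewrite meetUr; apply: pe_leU; first exact: pe_le_trans (pe_leIr _ _) (pe_leUl _ _).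
rewrite meetC meetUr; apply: pe_leU; first exact: pe_le_trans (pe_leIr _ _) (pe_leUl _ _).
by rewrite meetC; apply: pe_leUr.
Qed.

Definition pe_ideal (I : set T) : Prop :=
  (forall x y, I x -> I y -> I (x \v y)) /\ (forall x y, y <=: x -> I x -> I y).

Definition pe_prime_filter (F : T -> Prop) : Prop :=
  [/\ ~ F (pe0 L n), F (pe1 L n),
      forall x y, F (x \v y) <-> F x \/ F y &
      forall x y, F (x \w y) <-> F x /\ F y].

Lemma pe_prime_filter_le (F : T -> Prop) (x y : T) :
  pe_prime_filter F -> x <=: y -> F x -> F y.
Proof. by case=> _ _ _ FI -> /FI[]. Qed.

Lemma pe_ideal_joinr (A : set T) (x : T) :
  pe_ideal A -> pe_ideal [set z | exists2 i, A i & z <=: i \v x].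
Proof.
case=> AU Ale; split=> [z w [i Ai zi] [j Aj wj] | z w wz [i Ai zi]].
- exists (i \v j); first exact: AU.
  by apply: pe_leU; [apply: pe_le_trans zi _ | apply: pe_le_trans wj _];
    apply: pe_leU2 (pe_le_refl _); [exact: pe_leUl | exact: pe_leUr].
- by exists i => //; apply: pe_le_trans zi.
Qed.

Lemma maximal_ideal_avoiding (a b : T) : ~ a <=: b ->
  exists A : set T, [/\ pe_ideal A, A b, ~ A a &
    forall B, pe_ideal B -> ~ B a -> A `<=` B -> B `<=` A].
Proof.
move=> nab.
(* The last clause admits [set0], the union of the empty chain. *)
pose P (I : set T) := [/\ pe_ideal I, ~ I a & forall x, I x -> I b].
have [A [[idA nAa Ab] Amax]] : exists A, P A /\ forall B, A `<` B -> ~ P B.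
  apply: Zorn_bigcup => C CP Ctot; split.
  - split=> [x y [X CX Xx] [Y CY Yy] | x y yx [X CX Xx]].
      have [XY|YX] := Ctot _ _ CX CY.
        by exists Y => //; have [[YU _] _ _] := CP _ CY; apply: YU => //; apply: XY.
      by exists X => //; have [[XU _] _ _] := CP _ CX; apply: XU => //; apply: YX.
    by exists X => //; have [[_ Xle] _ _] := CP _ CX; apply: Xle yx Xx.
  - by case=> X CX; have [_ nXa _] := CP _ CX.
  - by move=> x [X CX Xx]; exists X => //; have [_ _ Xb] := CP _ CX; apply: Xb Xx.
have Pb : P [set y | y <=: b].
  split=> [|//|x _]; last exact: pe_le_refl.
  by split=> [x y|x y yx xb]; [apply: pe_leU | apply: pe_le_trans xb].
have Abb : A b.
  apply: contrapT => nAb; apply: Amax Pb; split=> [x /Ab //|bA].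
  exact/nAb/bA/pe_le_refl.
exists A; split=> // B idB nBa AB.
apply: contrapT => nBA; apply: (Amax B) => //.
by split=> // x _; apply: AB.
Qed.

Lemma maximal_ideal_prime (a b : T) (A : set T) : pe_ideal A -> A b -> ~ A a ->
  (forall B, pe_ideal B -> ~ B a -> A `<=` B -> B `<=` A) ->
  forall x y, A (x \w y) -> A x \/ A y.
Proof.
move=> [AU Ale] Ab nAa Amax.
have below x : ~ A x -> exists2 i, A i & a <=: i \v x.
  move=> nAx; apply: contrapT => noi; apply: nAx.
  apply: (Amax _ (pe_ideal_joinr x (conj AU Ale))).
  - by case=> i Ai ai; apply: noi; exists i.
  - by move=> z Az; exists z => //; apply: pe_leUl.
  - by exists b => //; apply: pe_leUr.
move=> x y Axy; apply: contrapT => /not_orP[/below[i Ai ai] /below[j Aj aj]].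
apply: nAa; apply: Ale (AU _ _ (AU _ _ Ai Aj) Axy).
apply: pe_le_trans (pe_leUI _ _ _); apply: pe_leI.
- by apply: pe_le_trans ai _; apply: pe_leU2 (pe_le_refl _); apply: pe_leUl.
- by apply: pe_le_trans aj _; apply: pe_leU2 (pe_le_refl _); apply: pe_leUr.
Qed.

Lemma prime_filter_separating (a b : T) : ~ a <=: b ->
  exists2 F : T -> Prop, pe_prime_filter F & F a /\ ~ F b.
Proof.
move=> /maximal_ideal_avoiding[A [[AU Ale] Ab nAa Amax]].
have Aprime := maximal_ideal_prime (conj AU Ale) Ab nAa Amax.
exists (fun x => ~ A x); last by split=> // /(_ Ab).
split=> [/(_ (Ale _ _ (pe_le0x b) Ab)) | /(Ale _ _ (pe_lex1 a)) | x y | x y] //.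
- split=> [nAxy | nAxy Axy].
    by apply/not_andP => -[Ax Ay]; apply: nAxy; apply: AU.
  by case: nAxy; apply; [apply: Ale (pe_leUl x y) Axy | apply: Ale (pe_leUr x y) Axy].
- split=> [nAxy | [nAx nAy] /Aprime[] //].
  by split=> Ax; apply: nAxy; apply: Ale Ax; [apply: pe_leIl | apply: pe_leIr].
Qed.

End Lattice.

Local Close Scope classical_set_scope.

Lemma pe_le_subst (L : PEAlg) (n k : nat) (a : {ffun 'I_n -> 'I_k}) (x y : car L n) :
  ax2 L -> pe_le x y -> pe_le (subst a x) (subst a y).
Proof. by rewrite /pe_le => H2 xy; have [_ _ _ <-] := H2 _ _ a x y; rewrite -xy. Qed.

Lemma compf_finfun (m k p : nat) (a : {ffun 'I_m -> 'I_k}) (x : 'I_k -> 'I_p) :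
  compf (finfun x) a = finfun (subst_tuple a x).
Proof. by apply/ffunP => i; rewrite !ffunE. Qed.

Lemma compf_snoc_cyl (m p : nat) (x : 'I_m -> 'I_p) (y : 'I_p) :
  compf (finfun (snoc_tuple x y)) (cyl m) = finfun x.
Proof.
apply/ffunP => i; rewrite !ffunE /snoc_tuple.
have -> : widen_ord (leqnSn m) i = lift ord_max i.
  by apply: val_inj; rewrite /= /bump leqNgt ltn_ord.
by rewrite liftK.
Qed.

Section FilterModel.
Variables (L : PEAlg) (n : nat) (F : car L n -> Prop).
Hypotheses (HL : pe_axioms L) (HF : pe_prime_filter F).

Definition filter_model (m : nat) (t : car L m) : perel 'I_n m :=
  fun x => F (subst (finfun x) t).

Lemma filter_model_almost_morphism : almost_morphism filter_model.
Proof.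
have [_ H2 H3 _ H8] := HL; have [F0 F1 FU FI] := HF; rewrite /filter_model.
split=> [m k a t x|]; first by rewrite -H3 compf_finfun.
split=> [m x|]; first by have [-> _ _ _] := H2 _ _ (finfun x) (pe0 L m) (pe0 L m).
split=> [m x|]; first by have [_ -> _ _] := H2 _ _ (finfun x) (pe0 L m) (pe0 L m).
split=> [m t u x|]; first by have [_ _ -> _] := H2 _ _ (finfun x) t u.
split=> [m t u x|m t x [y Fy]]; first by have [_ _ _ ->] := H2 _ _ (finfun x) t u.
apply: pe_prime_filter_le HF _ Fy.
by rewrite -(compf_snoc_cyl x y) H3; apply: pe_le_subst H2 (H8 m t).
Qed.

Lemma filter_model_id (t : car L n) : filter_model t (fun i => i) <-> F t.
Proof. by have [_ _ _ H4 _] := HL; rewrite /filter_model -/(idf n) H4. Qed.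

End FilterModel.

Theorem lemma4p9 (L : PEAlg) (HL : pe_axioms L) (n : nat) (r s : car L n) :
  r <> s ->
  exists (W : Type) (phi : forall m, car L m -> perel W m),
    almost_morphism phi /\ exists x : 'I_n -> W, ~ (phi n r x <-> phi n s x).
Proof.
move=> rs; have [H1 _ _ _ _] := HL.
have [[F HF [Fr nFs]] | [F HF [Fs nFr]]] : (exists2 F, pe_prime_filter F & F r /\ ~ F s)
    \/ (exists2 F, pe_prime_filter F & F s /\ ~ F r).
  have [sr|nsr] := pselect (pe_le s r); last by right; apply: prime_filter_separating.
  left; apply: prime_filter_separating => // rs'.
  exact/rs/(pe_le_anti H1).
all: exists 'I_n, (filter_model F); split; first exact: filter_model_almost_morphism.
all: by exists (fun i => i); rewrite !filter_model_id; tauto.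
Qed.
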